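(* Let $A,B$ be real $m\times n$ matrices with a simultaneous block structure, and let $b$ be the number of blocks. Let $P,Q$ be $m\times n$ matrices such that $P$ is binary and all entries of $Q$ lie in $[0,1]$. Then $$\|(A-B)\circ Q\|_{\bar F}\le\|(A-B)\circ P\|_{\bar F}+\sqrt{b\|P-Q\|_\Box}\,\|A-B\|_\infty.$$
   Context: A binary matrix has entries in $\{0,1\}$. $\circ$ is the entrywise product; $\|A\|_\infty=\max|a_{ij}|$; $\|A\|_{\bar F}=\big(\frac1{mn}\sum_{i,j}a_{ij}^2\big)^{1/2}$; $\|A\|_\Box=\frac1{mn}\max\{|x^TAy|:x\in\mathbb{R}^m,y\in\mathbb{R}^n,\|x\|_\infty\le1,\|y\|_\infty\le1\}$. A matrix is a block matrix if the rows are partitioned into consecutive intervals and the columns into consecutive intervals such that the matrix is constant on each product of a row interval and a column interval (the blocks); two matrices have a simultaneous block structure if both are block matrices for the same row and column partitions. *)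

From HB Require Import structures.
From mathcomp Require Import all_boot all_order all_algebra.
From mathcomp Require Import boolp classical_sets reals.
Set Implicit Arguments. Unset Strict Implicit. Unset Printing Implicit Defensive.
Import Order.TTheory GRing.Theory Num.Theory.
Local Open Scope ring_scope.
Local Open Scope classical_set_scope.

Section Defs.
Variable R : realType.

Definition hadamard m n (A B : 'M[R]_(m, n)) : 'M[R]_(m, n) :=
  \matrix_(i, j) (A i j * B i j).

(* ||A||_inf = max |a_ij| (0 for an empty matrix) *)
Definition infnorm m n (A : 'M[R]_(m, n)) : R :=
  \big[Num.max/0]_(i < m) \big[Num.max/0]_(j < n) `|A i j|.

Definition fbarnorm m n (A : 'M[R]_(m, n)) : R :=
  Num.sqrt ((\sum_(i < m) \sum_(j < n) A i j ^+ 2) / (m * n)%:R).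

Definition cutnorm m n (A : 'M[R]_(m, n)) : R :=
  sup [set r : R | exists (x : 'cV[R]_m) (y : 'cV[R]_n),
         (forall i, `|x i 0| <= 1) /\ (forall j, `|y j 0| <= 1) /\
         r = `|(x^T *m A *m y) 0 0|] / (m * n)%:R.

Definition binary_mx m n (P : 'M[R]_(m, n)) : Prop :=
  forall i j, P i j = 0 \/ P i j = 1.

(* A partition of 'I_m into r nonempty consecutive intervals, given by the
   map sending an index to the number of its interval: nondecreasing, onto. *)
Definition interval_partition m r (f : 'I_m -> 'I_r) : Prop :=
  (forall i j : 'I_m, (i <= j)%N -> (f i <= f j)%N) /\
  (forall k : 'I_r, exists i, f i = k).

Definition block_const m n r c (f : 'I_m -> 'I_r) (g : 'I_n -> 'I_c)
  (A : 'M[R]_(m, n)) : Prop :=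
  forall i i' j j', f i = f i' -> g j = g j' -> A i j = A i' j'.

End Defs.

(** Write [D = A - B].  Since [Q] takes values in [0,1] and [P] is binary,
    [(D q)^2 <= (D p)^2 + D^2 (q - p)] entrywise, so the squared Frobenius
    norms differ by at most [sum D_ij^2 (Q - P)_ij].  On each of the [b]
    blocks [D] is constant, so a block contributes [D^2] times the sum of
    [Q - P] over a rectangle; that sum is the bilinear form [x^T (P - Q) y] at
    indicator vectors, hence at most [mn ||P - Q||_Box] in absolute value.
    Conclude with [sqrt (u + v) <= sqrt u + sqrt v]. *)
From HB Require Import structures.
From mathcomp Require Import all_boot all_order all_algebra.
From mathcomp Require Import boolp classical_sets reals.
From mathcomp Require Import lra.
Set Implicit Arguments. Unset Strict Implicit. Unset Printing Implicit Defensive.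
Import Order.TTheory GRing.Theory Num.Theory.
Local Open Scope ring_scope.

Lemma sqrtrD_le {R : rcfType} (a b : R) :
  0 <= a -> 0 <= b -> Num.sqrt (a + b) <= Num.sqrt a + Num.sqrt b.
Proof.
move=> a0 b0; have ab0 := mulr_ge0 (sqrtr_ge0 a) (sqrtr_ge0 b).
rewrite -[leRHS]ger0_norm ?addr_ge0 ?sqrtr_ge0 // -sqrtr_sqr.
rewrite ler_sqrt ?sqr_ge0 // sqrrD !sqr_sqrtr //; lra.
Qed.

Section MatrixNorms.
Variables (R : realType) (m n : nat).
Implicit Types (M D P Q X Y : 'M[R]_(m, n)) (x : 'cV[R]_m) (y : 'cV[R]_n).

Definition cut_set M : set R :=
  [set t | exists x y, (forall i, `|x i 0| <= 1) /\ (forall j, `|y j 0| <= 1) /\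
                       t = `|(x^T *m M *m y) 0 0|].

Lemma cutnormE M : cutnorm M = sup (cut_set M) / (m * n)%:R.
Proof. by []. Qed.

Lemma bilinear_formE M x y :
  (x^T *m M *m y) 0 0 = \sum_i \sum_j x i 0 * M i j * y j 0.
Proof.
rewrite mxE exchange_big; apply: eq_bigr => j _.
by rewrite mxE mulr_suml; apply: eq_bigr => i _; rewrite mxE.
Qed.

Lemma has_ubound_cut_set M : has_ubound (cut_set M).
Proof.
exists (\sum_i \sum_j `|M i j|) => _ [x [y [x1 [y1 ->]]]].
rewrite bilinear_formE; apply: le_trans (ler_norm_sum _ _ _) _.
apply: ler_sum => i _; apply: le_trans (ler_norm_sum _ _ _) _.
apply: ler_sum => j _; rewrite !normrM -[leRHS]mul1r -[leRHS]mulr1.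
by rewrite ler_pM ?mulr_ge0 // ler_pM.
Qed.

Lemma cut_set_rect M (I : pred 'I_m) (J : pred 'I_n) :
  cut_set M `|\sum_(i | I i) \sum_(j | J j) M i j|.
Proof.
have indicator_le1 T (K : pred T) t : `|(K t)%:R : R| <= 1.
  by case: (K t); rewrite ?normr0 ?normr1.
exists (\col_i (I i)%:R), (\col_j (J j)%:R).
split=> [i|]; first by rewrite mxE indicator_le1.
split=> [j|]; first by rewrite mxE indicator_le1.
rewrite bilinear_formE big_mkcond; congr `|_|; apply: eq_bigr => i _.
rewrite big_mkcond mxE; case: (I i) => /=.
  by apply: eq_bigr => j _; rewrite mxE mul1r; case: (J j); rewrite ?mulr1 ?mulr0.
by rewrite big1 // => j _; rewrite !mul0r.
Qed.

Lemma sup_cut_set_ge0 M : 0 <= sup (cut_set M).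
Proof.
apply: le_trans _ (ub_le_sup (has_ubound_cut_set M) (cut_set_rect M pred0 pred0)).
exact: normr_ge0.
Qed.

Lemma ler_infnorm D i j : `|D i j| <= infnorm D.
Proof.
apply: le_trans (le_bigmax _ (fun i => \big[Num.max/0]_(j < n) `|D i j|) i).
exact: (le_bigmax _ (fun j => `|D i j|) j).
Qed.

Lemma infnorm_ge0 D : 0 <= infnorm D.
Proof. exact: bigmax_ge_id. Qed.

Lemma sqr_le_infnorm D i j : D i j ^+ 2 <= infnorm D ^+ 2.
Proof.
by rewrite -real_normK ?num_real // ler_sqr ?nnegrE ?infnorm_ge0 ?ler_infnorm.
Qed.

Lemma norm_sum_rect_weighted_le D M (I : pred 'I_m) (J : pred 'I_n) :
  (forall i i' j j', I i -> I i' -> J j -> J j' -> D i j = D i' j') ->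
  `|\sum_(i | I i) \sum_(j | J j) D i j ^+ 2 * M i j|
    <= infnorm D ^+ 2 * `|\sum_(i | I i) \sum_(j | J j) M i j|.
Proof.
move=> Dconst; have rhs_ge0 := mulr_ge0 (sqr_ge0 (infnorm D)) (normr_ge0 _).
have [i0 Ii0|I0] := pickP I; first last.
  by rewrite big_pred0 // normr0 rhs_ge0.
have [j0 Jj0|J0] := pickP J; first last.
  by rewrite big1 ?normr0 ?rhs_ge0 // => i _; apply: big_pred0.
have -> : \sum_(i | I i) \sum_(j | J j) D i j ^+ 2 * M i j
          = D i0 j0 ^+ 2 * \sum_(i | I i) \sum_(j | J j) M i j.
  rewrite mulr_sumr; apply: eq_bigr => i Ii; rewrite mulr_sumr.
  by apply: eq_bigr => j Jj; rewrite (Dconst i i0 j j0).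
by rewrite normrM ger0_norm ?sqr_ge0 // ler_wpM2r ?sqr_le_infnorm.
Qed.

Section Blocks.
Variables (r c : nat) (f : 'I_m -> 'I_r) (g : 'I_n -> 'I_c).

Lemma block_constB (A B : 'M[R]_(m, n)) :
  block_const f g A -> block_const f g B -> block_const f g (A - B).
Proof.
move=> Ablock Bblock i i' j j' fi gj.
by rewrite !mxE (Ablock _ _ _ _ fi gj) (Bblock _ _ _ _ fi gj).
Qed.

Lemma sum_by_blocks (F : 'I_m -> 'I_n -> R) :
  \sum_i \sum_j F i j
    = \sum_k \sum_l \sum_(i | f i == k) \sum_(j | g j == l) F i j.
Proof.
rewrite (partition_big f xpredT) //=; apply: eq_bigr => k _.
under eq_bigr do rewrite (partition_big g xpredT) //=.
exact: exchange_big.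
Qed.

Lemma norm_sum_block_weighted_le D M : block_const f g D ->
  `|\sum_i \sum_j D i j ^+ 2 * M i j|
    <= (r * c)%:R * sup (cut_set M) * infnorm D ^+ 2.
Proof.
move=> Dblock; rewrite sum_by_blocks.
have block_le k l :
    `|\sum_(i | f i == k) \sum_(j | g j == l) D i j ^+ 2 * M i j|
      <= sup (cut_set M) * infnorm D ^+ 2.
  have Dconst i i' j j' : f i == k -> f i' == k -> g j == l -> g j' == l ->
      D i j = D i' j'.
    by move=> /eqP fi /eqP fi' /eqP gj /eqP gj'; apply: Dblock; rewrite ?fi ?gj.
  apply: le_trans (norm_sum_rect_weighted_le M Dconst) _.
  rewrite mulrC ler_wpM2r ?sqr_ge0 //.
  exact: (ub_le_sup (has_ubound_cut_set M) (cut_set_rect M _ _)).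
apply: le_trans (ler_norm_sum _ _ _) _.
apply: le_trans (ler_sum _ (fun k _ => le_trans (ler_norm_sum _ _ _)
                                 (ler_sum _ (fun l _ => block_le k l)))) _.
by rewrite !sumr_const !card_ord -mulrA mulr_natl mulnC mulrnA.
Qed.

End Blocks.

Lemma sqr_mul_binary_le (d p q : R) : (p = 0 \/ p = 1) -> 0 <= q <= 1 ->
  (d * q) ^+ 2 <= (d * p) ^+ 2 - d ^+ 2 * (p - q).
Proof.
move=> p01 /andP[q0 q1].
have q1' : 0 <= 1 - q by rewrite subr_ge0.
have := mulr_ge0 (sqr_ge0 d) (mulr_ge0 q0 q1').
by case: p01 => ->; nra.
Qed.

Lemma sum_sqr_hadamard_le D P Q :
  binary_mx P -> (forall i j, 0 <= Q i j <= 1) ->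
  \sum_i \sum_j hadamard D Q i j ^+ 2
    <= \sum_i \sum_j hadamard D P i j ^+ 2
       + `|\sum_i \sum_j D i j ^+ 2 * (P - Q) i j|.
Proof.
move=> Pbin Q01; have lerN_norm (s : R) : - s <= `|s| by rewrite -normrN ler_norm.
apply: le_trans (lerD (lexx _) (lerN_norm _)).
rewrite -sumrN -big_split /=; apply: ler_sum => i _.
rewrite -sumrN -big_split /=; apply: ler_sum => j _.
by rewrite !mxE; apply: sqr_mul_binary_le.
Qed.

Lemma fbarnorm_le_add X Y (e : R) : 0 <= e ->
  \sum_i \sum_j X i j ^+ 2 <= \sum_i \sum_j Y i j ^+ 2 + e ->
  fbarnorm X <= fbarnorm Y + Num.sqrt (e / (m * n)%:R).
Proof.
move=> e0 XY; have N0 : 0 <= ((m * n)%:R : R)^-1 by rewrite invr_ge0.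
have sumY0 : 0 <= \sum_i \sum_j Y i j ^+ 2.
  by apply: sumr_ge0 => i _; apply: sumr_ge0 => j _; apply: sqr_ge0.
apply: le_trans _ (sqrtrD_le (mulr_ge0 sumY0 N0) (mulr_ge0 e0 N0)).
by rewrite ler_wsqrtr // -mulrDl ler_wpM2r.
Qed.

End MatrixNorms.

Theorem lemma7p3 (R : realType) (m n r c : nat)
  (f : 'I_m -> 'I_r) (g : 'I_n -> 'I_c) (A B P Q : 'M[R]_(m, n)) :
  interval_partition f -> interval_partition g ->
  block_const f g A -> block_const f g B ->
  binary_mx P -> (forall i j, 0 <= Q i j <= 1) ->
  fbarnorm (hadamard (A - B) Q) <=
    fbarnorm (hadamard (A - B) P)
    + Num.sqrt ((r * c)%:R * cutnorm (P - Q)) * infnorm (A - B).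
Proof.
move=> _ _ Ablock Bblock Pbin Q01.
have Dblock := block_constB Ablock Bblock.
set e := (r * c)%:R * sup (cut_set (P - Q)) * infnorm (A - B) ^+ 2.
have e_ge0 : 0 <= e.
  by rewrite mulr_ge0 ?sqr_ge0 ?mulr_ge0 ?sup_cut_set_ge0.
have sum_le : \sum_i \sum_j hadamard (A - B) Q i j ^+ 2
              <= \sum_i \sum_j hadamard (A - B) P i j ^+ 2 + e.
  apply: le_trans (sum_sqr_hadamard_le _ Pbin Q01) _.
  exact: lerD (lexx _) (norm_sum_block_weighted_le _ Dblock).
apply: le_trans (fbarnorm_le_add e_ge0 sum_le) _.
have -> : e / (m * n)%:R
          = (r * c)%:R * (sup (cut_set (P - Q)) / (m * n)%:R)
            * infnorm (A - B) ^+ 2.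
  by rewrite /e mulrAC -!mulrA.
rewrite lerD2l cutnormE sqrtrM ?mulr_ge0 ?invr_ge0 ?sup_cut_set_ge0 //.
by rewrite sqrtr_sqr ger0_norm ?infnorm_ge0.
Qed.
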